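(* Let $n\ge1$ and let $f(x):=P(x)+iQ(x)$ with $P(x):=x^n+a_1x^{n-1}+\cdots+a_n$ and $Q(x):=b_1x^{n-1}+\cdots+b_n$ real polynomials. Suppose $f$ has (counting multiplicities) $n_+$ roots with positive imaginary part, $n_-$ roots with negative imaginary part and $n_0<n$ real roots, and let $d:=n-2\min\{n_+,n_-\}$. Then there exist real roots $\mu_1,\ldots,\mu_d$ of $P$ and $\nu_1,\ldots,\nu_{d-1}$ of $Q$ (counting multiplicities) with $\mu_1\le\nu_1\le\mu_2\le\cdots\le\nu_{d-1}\le\mu_d$ (strict inequalities if $n_0=0$) which moreover satisfy: (i) if either $n_->n_+$ and $\lim_{x\to-\infty}P(x)/Q(x)=\infty$, or $n_-<n_+$ and $\lim_{x\to-\infty}P(x)/Q(x)=-\infty$, then $Q$ has an additional real root $\nu_0$ (i.e. $\nu_0,\nu_1,\ldots,\nu_{d-1}$ are roots of $Q$ counting multiplicities) with $\nu_0\le\mu_1$; (ii) if either $n_->n_+$ and $\lim_{x\to\infty}P(x)/Q(x)=-\infty$, or $n_-<n_+$ and $\lim_{x\to\infty}P(x)/Q(x)=\infty$, then $Q$ has an additional real root $\nu_d$ (i.e. $\nu_1,\ldots,\nu_{d-1},\nu_d$ are roots of $Q$ counting multiplicities) with $\nu_d\ge\mu_d$. If $n_0=0$, then $\nu_0<\mu_1$ and $\nu_d>\mu_d$. The same conclusion holds when instead $f(x)=x^n+a_1x^{n-1}+\cdots+a_n$ is a real polynomial with $n_+$ roots of positive real part, $n_-$ roots of negative real part, $n_0<n$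 purely imaginary roots, $d:=n-2\min(n_+,n_-)$, and $P(x):=x^n-a_2x^{n-2}+a_4x^{n-4}-\cdots$, $Q(x):=a_1x^{n-1}-a_3x^{n-3}+a_5x^{n-5}-\cdots$.
   Context: ''Counting multiplicities'' means that a root of multiplicity $m$ may appear up to $m$ times in the respective list of roots. *)

From HB Require Import structures.
From mathcomp Require Import all_boot all_order all_algebra.
From mathcomp Require Import complex.
From mathcomp Require Import all_classical all_reals all_analysis.
Set Implicit Arguments. Unset Strict Implicit. Unset Printing Implicit Defensive.
Import Order.TTheory GRing.Theory Num.Theory.
Import numFieldNormedType.Exports.
Local Open Scope classical_set_scope. Local Open Scope ring_scope.

Definition oseq (T : Type) (o : option T) : seq T :=
  if o is Some x then [:: x] else [::].

Definition polyC_of (R : realType) (p : {poly R}) : {poly R[i]} :=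
  map_poly (real_complex R) p.

Definition iC (R : realType) : R[i] := Complex 0 1.

Definition cond_left (R : realType) (np nm : nat) (P Q : {poly R}) : Prop :=
  ((np < nm)%N /\ (P.[x] / Q.[x]) @[x --> -oo] --> +oo) \/
  ((nm < np)%N /\ (P.[x] / Q.[x]) @[x --> -oo] --> -oo).

Definition cond_right (R : realType) (np nm : nat) (P Q : {poly R}) : Prop :=
  ((np < nm)%N /\ (P.[x] / Q.[x]) @[x --> +oo] --> -oo) \/
  ((nm < np)%N /\ (P.[x] / Q.[x]) @[x --> +oo] --> +oo).

(* The common conclusion.  d := n - 2 min(n+, n-).
   mu = [mu_1; ...; mu_d] are real roots of P counting multiplicities
   (their product of linear factors divides P); nu = [nu_1; ...; nu_{d-1}]
   together with the optional extra roots nu_0, nu_d are real roots of Q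
   counting multiplicities. *)
Definition interlacing_conclusion (R : realType) (n np nm n0 : nat)
    (P Q : {poly R}) : Prop :=
  let d := (n - 2 * minn np nm)%N in
  let weak := (n0 != 0)%N in
  exists (mu nu : seq R) (nu0 nud : option R),
    [/\ size mu = d, size nu = d.-1,
        (\prod_(x <- mu) ('X - x%:P) %| P)%R,
        (\prod_(x <- oseq nu0 ++ nu ++ oseq nud) ('X - x%:P) %| Q)%R &
      [/\
        (forall i, (i < d.-1)%N ->
           (mu`_i < nu`_i ?<= if weak) /\ (nu`_i < mu`_i.+1 ?<= if weak)),
        (cond_left np nm P Q ->
           exists2 v, nu0 = Some v & (v < mu`_0 ?<= if weak)) &
        (cond_right np nm P Q ->
           exists2 v, nud = Some v & (mu`_d.-1 < v ?<= if weak))]].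

(* Second setting: from f = X^n + a_1 X^(n-1) + ... + a_n (a_k = f`_(n-k)),
   P = X^n - a_2 X^(n-2) + a_4 X^(n-4) - ...,
   Q = a_1 X^(n-1) - a_3 X^(n-3) + a_5 X^(n-5) - ... *)
Definition even_part (R : realType) (n : nat) (f : {poly R}) : {poly R} :=
  \poly_(i < n.+1) (if odd (n - i) then 0 else (-1) ^+ ((n - i)./2) * f`_i).
Definition odd_part (R : realType) (n : nat) (f : {poly R}) : {poly R} :=
  \poly_(i < n.+1) (if odd (n - i) then (-1) ^+ ((n - i)./2) * f`_i else 0).

From HB Require Import structures.
From mathcomp Require Import all_boot all_order all_algebra.
From mathcomp Require Import complex.
From mathcomp Require Import all_classical all_reals all_analysis.
From mathcomp Require Import ring lra zify.
Import Order.TTheory GRing.Theory Num.Theory.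
Import numFieldNormedType.Exports.
Set Implicit Arguments. Unset Strict Implicit. Unset Printing Implicit Defensive.
Local Open Scope classical_set_scope. Local Open Scope ring_scope.

(* Split f = h g, where h is the (real) product of the linear factors of the
   real roots of f and g = P1 + i Q1 the product over the non-real roots z, so
   that P = h P1 and Q = h Q1.  For real x, g(x) = rho(x) e^(i Theta(x)) with
   rho > 0 and Theta = sum_z arg (x - z) continuous, Theta -> 0 at +oo and
   Theta -> (n_- - n_+) pi at -oo.  By the intermediate value theorem Theta
   crosses, in order, the levels e k pi/2 for 0 < k < 2K, where
   K = |n_- - n_+| and e is the sign of n_- - n_+; the odd levels are zeros of
   P1 = rho cos Theta and the even ones zeros of Q1 = rho sin Theta, so these
   zeros strictly interlace.  The limit of P/Q at
   -oo (resp. +oo) fixes the sign of cos Theta sin Theta there, which forces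
   one more crossing, of K pi (resp. 0): the extra zero nu_0 (resp. nu_d) of Q.
   Every real root of f is a common root of P and Q; inserting it twice into
   the chain keeps the interlacing, in the weak sense.  The second statement
   follows from the first applied to the roots -i z, which turns f into
   P - i Q and exchanges the roles of real and imaginary parts. *)

Section EveryOther.
Variable T : Type.

Fixpoint every_other (b : bool) (s : seq T) : seq T :=
  if s is x :: s' then
    if b then x :: every_other (~~ b) s' else every_other (~~ b) s'
  else [::].

Lemma size_every_other b s : size (every_other b s) = ((size s + b) %/ 2)%N.
Proof. by elim: s b => [|x s IHs] [] //=; rewrite IHs /=; lia. Qed.

Lemma nth_every_other x0 b s i :
  nth x0 (every_other b s) i = nth x0 s (i.*2 + ~~ b).
Proof.
elim: s b i => [|x s IHs] [] i /=; rewrite ?nth_nil //.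
- by case: i => [|i] //=; rewrite IHs addn0 addn1.
- by rewrite addn1 IHs addn0.
Qed.

End EveryOther.

Lemma map_every_other (T U : Type) (f : T -> U) b s :
  map f (every_other b s) = every_other b (map f s).
Proof. by elim: s b => [|x s IHs] [] //=; rewrite IHs. Qed.

Section EveryOtherEq.
Variable T : eqType.

Lemma every_other_subseq b (s : seq T) : subseq (every_other b s) s.
Proof.
elim: s b => [|x s IHs] [] //=; first by rewrite eqxx IHs.
exact: subseq_trans (IHs true) (subseq_cons _ _).
Qed.

Lemma perm_every_other_pair b (s1 s2 : seq T) x :
  perm_eq (every_other b (s1 ++ x :: x :: s2)) (x :: every_other b (s1 ++ s2)).
Proof.
elim: s1 b => [|y s1 IHs1] [] //=.
apply: perm_trans (_ : perm_eq _ (y :: x :: every_other false (s1 ++ s2))) _.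
  by rewrite perm_cons IHs1.
by rewrite -(cat1s y) -(cat1s x) perm_catCA.
Qed.

End EveryOtherEq.

Lemma odd_every_other_iota b m n k :
  k \in every_other b (iota m n) -> odd k = odd m (+) ~~ b.
Proof.
elim: n m b => [|n IHn] m b //=; case: b => /=.
  rewrite in_cons => /predU1P[-> | /IHn ->]; first by rewrite addbF.
  by rewrite /= addbT negbK addbF.
by move=> /IHn ->; rewrite /= addbF addbT.
Qed.

Definition countdown (top bot : nat) : seq nat :=
  [seq top - i | i <- iota 0 (top - bot).+1]%N.

Lemma size_countdown top bot : size (countdown top bot) = (top - bot).+1.
Proof. by rewrite size_map size_iota. Qed.

Lemma countdown_sorted top bot : sorted gtn (countdown top bot).
Proof.
rewrite sorted_map; apply: (@sub_in_sorted _ (fun i => i <= top - bot)%N _ _ _ _ _ (iota_ltn_sorted 0 _)).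
  by move=> i j i_le j_le /= ij; lia.
by apply/allP => i; rewrite mem_iota; lia.
Qed.

Lemma mem_countdown top bot k : (bot <= top)%N ->
  k \in countdown top bot -> (bot <= k <= top)%N.
Proof. by move=> bot_top /mapP[i i_in ->]; move: i_in; rewrite mem_iota; lia. Qed.

Lemma odd_every_other_countdown b top bot k :
  k \in every_other b (countdown top bot) -> odd k = odd top (+) ~~ b.
Proof.
rewrite -map_every_other => /mapP[i i_in ->].
have i_le : (i <= top)%N.
  by move: (mem_subseq (every_other_subseq _ _) i_in); rewrite mem_iota; lia.
by rewrite oddB // (odd_every_other_iota i_in).
Qed.

Section InsertPairs.
Variable R : realDomainType.

Lemma sorted_insert_pair (s : seq R) x : sorted <=%R s ->
  exists s1 s2, s = s1 ++ s2 /\ sorted <=%R (s1 ++ x :: x :: s2).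
Proof.
elim: s => [|y s IHs] /= sorted_ys; first by exists [::], [::]; rewrite /= lexx.
have [xy | yx] := leP x y; first by exists [::], (y :: s); rewrite /= lexx xy.
have [s1 [s2 [def_s sorted12]]] := IHs (path_sorted sorted_ys).
exists (y :: s1), s2; split; first by rewrite def_s.
move: sorted_ys; rewrite def_s /= !path_sortedE; try exact: le_trans.
by rewrite sorted12 !all_cat /= (ltW yx) andbT => /andP[/andP[-> ->] _].
Qed.

Lemma sorted_insert_pairs (xs s : seq R) : sorted <=%R s ->
  exists s' : seq R, [/\ sorted <=%R s', size s' = (size s + 2 * size xs)%N &
    forall b, perm_eq (every_other b s') (xs ++ every_other b s)].
Proof.
elim: xs => [|x xs IHxs] sorted_s; first by exists s; rewrite addn0.
have [s' [sorted_s' size_s' perm_s']] := IHxs sorted_s.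
have [s1 [s2 [def_s' sorted12]]] := sorted_insert_pair x sorted_s'.
exists (s1 ++ x :: x :: s2); split => //.
  by move: (congr1 size def_s'); rewrite !size_cat /= size_s' /=; lia.
move=> b; rewrite (permPl (perm_every_other_pair b s1 s2 x)) /= perm_cons.
by rewrite -def_s'.
Qed.

Lemma sorted_lteif_insert_pairs (xs s : seq R) : sorted <%R s ->
  exists s' : seq R, [/\ sorted (fun x y => x < y ?<= if (xs != [::])) s',
    size s' = (size s + 2 * size xs)%N &
    forall b, perm_eq (every_other b s') (xs ++ every_other b s)].
Proof.
case: xs => [|x xs] sorted_s; first by exists s; rewrite addn0.
have [s' [sorted_s' size_s' perm_s']] :=
  sorted_insert_pairs (x :: xs) (sub_sorted (@ltW _ _) sorted_s).
by exists s'.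
Qed.

End InsertPairs.

Lemma oseq_ohead (T : Type) (b : bool) (l : seq T) :
  oseq (if b then ohead l else None) = take b l.
Proof. by case: b; case: l => //= x l; rewrite take0. Qed.

Lemma dvdp_prod_XsubC_take (R : idomainType) k (s : seq R) :
  \prod_(x <- take k s) ('X - x%:P) %| \prod_(x <- s) ('X - x%:P).
Proof. by rewrite -{2}(cat_take_drop k s) big_cat dvdp_mulIl. Qed.

Section ChainToInterlacing.
Variables (R : realType) (n np nm n0 : nat) (P Q : {poly R}).
Let d := (n - 2 * minn np nm)%N.

(* [c] lists zeros of [Q] and [P] alternately, starting with a zero of [Q] iff
   [s]: that one is [nu0], and when [e] holds [nud] is the zero of [Q] that
   follows the [d]-th zero of [P]. *)
Lemma interlacing_conclusion_of_chain (s e : bool) (c : seq R) :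
  (2 * d + s + e <= (size c).+1)%N ->
  sorted (fun x y => x < y ?<= if (n0 != 0)%N) c ->
  \prod_(x <- every_other (~~ s) c) ('X - x%:P) %| P ->
  \prod_(x <- every_other s c) ('X - x%:P) %| Q ->
  (cond_left np nm P Q -> s /\ (0 < d)%N) ->
  (cond_right np nm P Q -> e /\ (0 < d)%N) ->
  interlacing_conclusion n np nm n0 P Q.
Proof.
move=> size_c sorted_c dvd_P dvd_Q left_s right_e.
rewrite /interlacing_conclusion /= -/d; set w := (n0 != 0)%N.
have step j : (j.+1 < size c)%N -> c`_j < c`_j.+1 ?<= if w.
  by move/(sortedP 0): sorted_c => /(_ j).
have s1 : (s <= 1)%N by case: (s).
have ns : ((~~ s : nat) = 1 - s)%N by case: (s).
set mus := every_other (~~ s) c in dvd_P *; set qs := every_other s c in dvd_Q *.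
have nth_mus i : mus`_i = c`_(i.*2 + s) by rewrite nth_every_other negbK.
have nth_qs i : qs`_i = c`_(i.*2 + ~~ s) by rewrite nth_every_other.
have size_mus : (d <= size mus)%N by rewrite size_every_other ns; lia.
have size_qs : (0 < d)%N -> (s + d.-1 + e <= size qs)%N.
  by rewrite size_every_other; case: (s) (e) size_c => [] [] /=; lia.
have size_nu : (d.-1 <= size qs - s)%N.
  by rewrite size_every_other; case: (s) (e) size_c => [] [] /=; lia.
set nu := take d.-1 (drop s qs); set rest := drop d.-1 (drop s qs).
exists (take d mus), nu, (if s then ohead qs else None),
  (if e then ohead rest else None); split.
- by rewrite size_takel.
- by rewrite size_takel // size_drop.
- exact: dvdp_trans (dvdp_prod_XsubC_take _ _) dvd_P.
- by rewrite !oseq_ohead /nu /rest -!takeD (dvdp_trans (dvdp_prod_XsubC_take _ _)).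
split.
- move=> i lt_id; rewrite /nu !nth_take ?nth_drop ?nth_mus ?nth_qs; try lia.
  have -> : ((s + i).*2 + ~~ s = (i.*2 + s).+1)%N by rewrite ns; lia.
  have -> : (i.+1.*2 + s = (i.*2 + s).+2)%N by lia.
  by split; apply: step; case: (s) (e) size_c => [] [] /=; lia.
- move=> /left_s[s_true d_gt0]; have := size_qs d_gt0.
  rewrite s_true /= => size_qs'; rewrite s_true in size_c nth_qs nth_mus.
  rewrite -[qs]drop0 (drop_nth 0 (_ : 0 < size qs)%N) /=; last by lia.
  exists qs`_0 => //; rewrite nth_take // nth_qs nth_mus /=.
  by apply: step; lia.
- move=> /right_e[e_true d_gt0]; have := size_qs d_gt0; rewrite e_true /= => size_qs'.
  rewrite e_true in size_c.
  rewrite /rest drop_drop (drop_nth 0 (_ : d.-1 + s < size qs)%N); last by lia.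
  exists qs`_(d.-1 + s) => //; rewrite nth_take ?prednK // nth_mus nth_qs.
  have -> : ((d.-1 + s).*2 + ~~ s = (d.-1.*2 + s).+1)%N by rewrite ns; lia.
  by apply: step; lia.
Qed.

End ChainToInterlacing.

Section Phase.
Variable R : realType.
Implicit Types (z : R[i]) (zs : seq R[i]).

Lemma cvgNy_atan : atan x @[x --> -oo] --> (- (pi / 2) : R).
Proof.
apply/cvgNy_compNP; under eq_fun do rewrite /= atanN.
exact: (cvgN (@cvgy_atan R)).
Qed.

Lemma subr_div_cvgy (a b : R) : 0 < b -> (x - a) / b @[x --> +oo] --> +oo.
Proof.
move=> b_gt0; apply/cvgryPge => A; near=> x; rewrite ler_pdivlMr // lerBrDr.
by near: x; apply: nbhs_pinfty_ge; rewrite num_real.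
Unshelve. all: by end_near.
Qed.

Lemma atan_subr_div_cvgy (a b : R) : b != 0 ->
  atan ((x - a) / b) @[x --> +oo] --> (if 0 < b then pi / 2 else - (pi / 2)).
Proof.
move=> b_neq0; have [b_gt0 | b_le0] := ltP 0 b.
  exact: cvg_comp (subr_div_cvgy a b_gt0) (@cvgy_atan R).
have b_lt0 : b < 0 by rewrite lt_neqAle b_neq0.
apply: cvg_comp _ cvgNy_atan; apply/cvgNry.
rewrite (eq_cvg _ _ (_ : _ =1 fun x => (x - a) / - b)).
  by apply: subr_div_cvgy; rewrite oppr_gt0.
by move=> x /=; rewrite invrN mulrN.
Qed.

Lemma atan_subr_div_cvgNy (a b : R) : b != 0 ->
  atan ((x - a) / b) @[x --> -oo] --> (if 0 < b then - (pi / 2) else pi / 2).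
Proof.
move=> b_neq0; apply/cvgNy_compNP.
rewrite (eq_cvg _ _ (_ : _ =1 fun x => atan ((x - - a) / - b))); last first.
  by move=> x /=; rewrite invrN mulrN -mulNr opprD opprK.
have := atan_subr_div_cvgy (- a) (_ : - b != 0); rewrite oppr_eq0 oppr_gt0 => /(_ b_neq0).
by case: (ltgtP b 0) b_neq0.
Qed.

Lemma cos_atan_gt0 (t : R) : 0 < cos (atan t).
Proof. by apply: cos_gt0_pihalf; rewrite atan_gtNpi2 atan_ltpi2. Qed.

Lemma sin_atan (t : R) : sin (atan t) = t * cos (atan t).
Proof.
by rewrite -[X in _ = X * _](atanK t) /tan divfK // gt_eqF // cos_atan_gt0.
Qed.

(* A continuous branch of [arg (x - z)] on the real line, for non-real [z]. *)
Definition phase z (x : R) : R :=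
  atan ((x - complex.Re z) / complex.Im z) -
  (if 0 < complex.Im z then pi / 2 else - (pi / 2)).

Lemma continuous_phase z : continuous (phase z).
Proof.
move=> x; apply: continuousB; last exact: cst_continuous.
apply: (continuous_comp (f := fun x => (x - complex.Re z) / complex.Im z)); last exact: continuous_atan.
apply: continuousM; last exact: cst_continuous.
by apply: continuousB; last exact: cst_continuous.
Qed.

Lemma phase_cvgy z : complex.Im z != 0 -> phase z x @[x --> +oo] --> 0.
Proof.
move=> z_nonreal; rewrite -(subrr (if 0 < complex.Im z then pi / 2 else - (pi / 2))).
exact: cvgB (atan_subr_div_cvgy _ z_nonreal) (cvg_cst _).
Qed.

Lemma phase_cvgNy z : complex.Im z != 0 ->
  phase z x @[x --> -oo] --> (if 0 < complex.Im z then - pi else pi).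
Proof.
move=> z_nonreal.
have -> : (if 0 < complex.Im z then - pi else pi) =
    (if 0 < complex.Im z then - (pi / 2) else pi / 2) -
    (if 0 < complex.Im z then pi / 2 else - (pi / 2)) :> R.
  by case: ifP => _; field.
exact: cvgB (atan_subr_div_cvgNy _ z_nonreal) (cvg_cst _).
Qed.

Lemma phase_polar z x : complex.Im z != 0 -> exists2 rho : R, 0 < rho &
  (x%:C - z)%C = ((rho * cos (phase z x)) +i* (rho * sin (phase z x)))%C.
Proof.
case: z => a b /= b_neq0; rewrite /phase /=.
set t := (x - a) / b; have cos_gt0 := cos_atan_gt0 t; have sin_t := sin_atan t.
have tb : t * b = x - a by rewrite /t divfK.
have [b_gt0 | b_le0] := ltP 0 b.
  exists (b / cos (atan t)); first exact: divr_gt0.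
  rewrite cosBpihalf sinBpihalf sin_t; apply/eqP; rewrite eq_complex /=.
  by apply/andP; split; apply/eqP; rewrite -?tb; field; exact: lt0r_neq0.
have b_lt0 : b < 0 by rewrite lt_neqAle b_neq0.
exists (- b / cos (atan t)); first by rewrite divr_gt0 ?oppr_gt0.
rewrite opprK cosDpihalf sinDpihalf sin_t; apply/eqP; rewrite eq_complex /=.
by apply/andP; split; apply/eqP; rewrite -?tb; field; exact: lt0r_neq0.
Qed.

Definition total_phase zs (x : R) : R := \sum_(z <- zs) phase z x.

Lemma total_phase_polar zs x : all (fun z => complex.Im z != 0) zs ->
  exists2 rho : R, 0 < rho & (\prod_(z <- zs) (x%:C - z))%C =
    ((rho * cos (total_phase zs x)) +i* (rho * sin (total_phase zs x)))%C.
Proof.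
rewrite /total_phase; elim: zs => [|z zs IHzs] /=.
  by exists 1; rewrite // !big_nil cos0 sin0 !mulr1 mulr0.
case/andP => /(phase_polar x)[r1 r1_gt0 polar_z] /IHzs[r2 r2_gt0 polar_zs].
exists (r1 * r2); first exact: mulr_gt0.
rewrite !big_cons polar_z polar_zs cosD sinD; apply/eqP; rewrite eq_complex /=.
by apply/andP; split; apply/eqP; ring.
Qed.

Lemma continuous_total_phase zs : continuous (total_phase zs).
Proof.
by apply: (continuous_big (op := +%R) add_continuous) => z _; exact: continuous_phase.
Qed.

Lemma total_phase_cvgy zs : all (fun z => complex.Im z != 0) zs ->
  total_phase zs x @[x --> +oo] --> 0.
Proof.
rewrite /total_phase; elim: zs => [_|z zs IHzs /andP[z_nonreal /IHzs zs_cvg]].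
  by under eq_cvg do rewrite big_nil; exact: cvg_cst.
under eq_cvg do rewrite big_cons.
by have := cvgD (phase_cvgy z_nonreal) zs_cvg; rewrite addr0; apply.
Qed.

Lemma total_phase_cvgNy zs : all (fun z => complex.Im z != 0) zs ->
  total_phase zs x @[x --> -oo] -->
  ((count (fun z => complex.Im z < 0) zs)%:R -
   (count (fun z => 0 < complex.Im z) zs)%:R) * pi.
Proof.
rewrite /total_phase; elim: zs => [_|z zs IHzs /andP[z_nonreal /IHzs zs_cvg]].
  by under eq_cvg do rewrite big_nil; rewrite subrr mul0r; exact: cvg_cst.
under eq_cvg do rewrite big_cons.
set l := (_ - _) * pi in zs_cvg.
rewrite (_ : ((count _ (z :: zs))%:R - _) * pi =
  (if 0 < complex.Im z then - pi else pi) + l).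
  exact: cvgD (phase_cvgNy z_nonreal) zs_cvg.
by rewrite /l /= !natrD; case: ltgtP z_nonreal => //= _ _; ring.
Qed.

End Phase.

Section Crossings.
Variable R : realType.

Lemma pihalf_gt0 : 0 < pi / 2 :> R.
Proof. by rewrite divr_gt0 ?pi_gt0. Qed.

Lemma sin_mulpi_half (k : nat) : ~~ odd k -> sin (k%:R * (pi / 2)) = 0 :> R.
Proof.
move=> k_even; rewrite -[k]odd_double_half (negPf k_even) add0n -mul2n natrM.
have -> : 2%:R * (k./2)%:R * (pi / 2) = 0 + pi *+ k./2 :> R.
  by rewrite add0r -mulr_natl; field.
by rewrite (alternatingn (@sinDpi R)) sin0 mulr0.
Qed.

Lemma cos_mulpi_half (k : nat) : odd k -> cos (k%:R * (pi / 2)) = 0 :> R.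
Proof.
move=> k_odd; rewrite -[k]odd_double_half k_odd -mul2n natrD natrM.
have -> : (1%:R + 2%:R * (k./2)%:R) * (pi / 2) = pi / 2 + pi *+ k./2 :> R.
  by rewrite -mulr_natl; field.
by rewrite (alternatingn (@cosDpi R)) cos_pihalf mulr0.
Qed.

Lemma cos_sin_Dnatpi (t : R) (K : nat) :
  cos (t + K%:R * pi) * sin (t + K%:R * pi) = cos t * sin t.
Proof.
rewrite mulr_natl (alternatingn (@cosDpi R)) (alternatingn (@sinDpi R)).
by rewrite mulrACA -exprD addnn -mul2n exprM sqrrN !expr1n mul1r.
Qed.

Lemma cos_sin_gt0 (t : R) : `|t| < pi / 2 -> (0 < cos t * sin t) = (0 < t).
Proof.
rewrite ltr_norml => /andP[lt_t t_lt].
have pi_half_lt_pi : pi / 2 < pi :> R by rewrite ltr_pdivrMr // ltr_pMr ?pi_gt0 ?ltr1n.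
rewrite pmulr_rgt0; last by apply: cos_gt0_pihalf; rewrite lt_t t_lt.
have [t_gt0 | t_le0] := ltP 0 t.
  by apply: sin_gt0_pi; rewrite t_gt0 (lt_trans t_lt).
rewrite -oppr_lt0 -sinN ltNge; apply/negbF/sin_ge0_pi.
by rewrite oppr_ge0 t_le0 ltW // ltrNl (lt_trans _ lt_t) // ltrN2.
Qed.

Lemma IVT_strict (f : R -> R) (a b v : R) : continuous f -> a < b ->
  f b < v < f a -> exists2 c, a < c < b & f c = v.
Proof.
move=> f_cont ab /andP[fb_v v_fa].
have [|c] := @IVT R f a b v (ltW ab) (continuous_subspaceT f_cont).
  by rewrite ge_min le_max (ltW fb_v) (ltW v_fa) orbT.
rewrite in_itv /= => /andP[ac cb] fc; exists c => //.
rewrite !lt_neqAle ac cb !andbT; apply/andP; split; apply/eqP => c_eq.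
  by move: v_fa; rewrite -fc -c_eq ltxx.
by move: fb_v; rewrite -fc c_eq ltxx.
Qed.

Lemma IVT_chain (f : R -> R) (a b : R) (ls : seq R) : continuous f -> a < b ->
  sorted >%R ls -> all (fun l => f b < l < f a) ls ->
  exists c : seq R, [/\ path <%R a c, all (fun x => x < b) c & map f c = ls].
Proof.
move=> f_cont; elim: ls a => [|l ls IHls] a ab; first by exists [::].
move=> sorted_ls /andP[range_l range_ls].
have [c0 /andP[a_c0 c0_b] f_c0] := IVT_strict f_cont ab range_l.
have [|c [path_c c_b f_c]] := IHls c0 c0_b (path_sorted sorted_ls).
  apply/allP => l' l'_in; have /andP[-> _] := allP range_ls _ l'_in.
  by rewrite f_c0; exact: (allP (order_path_min (rev_trans lt_trans) sorted_ls)).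
by exists (c0 :: c); rewrite /= a_c0 path_c c0_b c_b f_c0 f_c.
Qed.

Section LevelCrossings.
Variables (psi : R -> R) (K : nat).

Lemma crossing_start (s : bool) : (~~ s <= K.*2)%N ->
  psi x @[x --> -oo] --> K%:R * pi ->
  (s -> \forall x \near -oo, 0 < cos (psi x) * sin (psi x)) ->
  \forall x \near -oo, (K.*2 - ~~ s)%:R * (pi / 2) < psi x.
Proof.
move=> s_le psi_cvg sign_s.
have K_pi : (K.*2)%:R * (pi / 2) = K%:R * pi :> R by rewrite -mul2n natrM; field.
have near_K : \forall x \near -oo, `|K%:R * pi - psi x| < pi / 2.
  exact: cvgr_dist_lt _ _ psi_cvg _ pihalf_gt0.
case: s s_le sign_s => [_ /(_ isT) sign | s_le _]; near=> x.
  rewrite subn0 K_pi -subr_gt0 -cos_sin_gt0; last by rewrite distrC; near: x.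
  by rewrite -(cos_sin_Dnatpi _ K) subrK; near: x.
rewrite natrB // mulrBl K_pi mul1r.
have : `|K%:R * pi - psi x| < pi / 2 by near: x.
by rewrite ltr_norml => /andP[_]; lra.
Unshelve. all: by end_near.
Qed.

Lemma crossing_end (e : bool) : psi x @[x --> +oo] --> 0 ->
  (e -> \forall x \near +oo, cos (psi x) * sin (psi x) < 0) ->
  \forall x \near +oo, psi x < (~~ e)%:R * (pi / 2).
Proof.
move=> psi_cvg sign_e.
have near_0 : \forall x \near +oo, `|psi x| < pi / 2.
  apply: filterS (cvgr_dist_lt _ _ psi_cvg _ pihalf_gt0) => x.
  by rewrite sub0r normrN.
case: e sign_e => [/(_ isT) sign|_]; near=> x.
  rewrite mul0r -oppr_gt0 -cos_sin_gt0 ?normrN; last by near: x.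
  by rewrite cosN sinN mulrN oppr_gt0; near: x.
have : `|psi x| < pi / 2 by near: x.
by rewrite mul1r ltr_norml => /andP[].
Unshelve. all: by end_near.
Qed.

Lemma crossing_chain (s e : bool) : continuous psi ->
  psi x @[x --> -oo] --> K%:R * pi -> psi x @[x --> +oo] --> 0 ->
  (s -> \forall x \near -oo, 0 < cos (psi x) * sin (psi x)) ->
  (e -> \forall x \near +oo, cos (psi x) * sin (psi x) < 0) ->
  exists c : seq R, [/\ sorted <%R c, (K.*2 + s + e <= (size c).+1)%N,
    all (fun x => cos (psi x) == 0) (every_other (~~ s) c) &
    all (fun x => sin (psi x) == 0) (every_other s c)].
Proof.
move=> psi_cont psi_cvgNy psi_cvgy sign_s sign_e.
have [small | big] := leqP (K.*2 + s + e) 1; first by exists [::].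
have s_le : (~~ s <= K.*2)%N by case: (s) (e) big => [] [] /=; lia.
set top := (K.*2 - ~~ s)%N; set bot : nat := ~~ e.
have bot_top : (bot <= top)%N by rewrite /bot /top; case: (s) (e) big => [] [] /=; lia.
have odd_top : odd top = ~~ s by rewrite oddB // odd_double; case: (s).
pose level (k : nat) : R := k%:R * (pi / 2).
have [a start_a] : exists a, level top < psi a.
  exact: filter_ex (crossing_start s_le psi_cvgNy sign_s).
have [b [ab end_b]] : exists b, a < b /\ psi b < level bot.
  apply: (@filter_ex _ +oo); near=> x; split; near: x.
    by apply: nbhs_pinfty_gt; rewrite num_real.
  exact: crossing_end psi_cvgy sign_e.
have [||c [path_c _ psi_c]] := IVT_chain (ls := map level (countdown top bot)) psi_cont ab.
- rewrite sorted_map; apply: sub_sorted (countdown_sorted top bot) => k k' /=.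
  by rewrite ltr_pM2r ?pihalf_gt0 // ltr_nat.
- apply/allP => _ /mapP[k /(mem_countdown bot_top)/andP[bot_k k_top] ->].
  by rewrite (lt_le_trans end_b) ?(le_lt_trans _ start_a) // ler_pM2r ?pihalf_gt0 ?ler_nat.
have level_of (t : bool) x : x \in every_other t c ->
    exists2 k, k \in every_other t (countdown top bot) & psi x = level k.
  move=> x_in; apply/mapP; rewrite map_every_other -psi_c -map_every_other.
  exact: map_f.
exists c; split.
- exact: path_sorted path_c.
- rewrite -(size_map psi) psi_c size_map size_countdown /top /bot.
  by case: (s) (e) big => [] [] /=; lia.
- apply/allP => x /level_of[k /odd_every_other_countdown k_odd ->].
  by rewrite cos_mulpi_half // k_odd odd_top negbK; case: (s).
- apply/allP => x /level_of[k /odd_every_other_countdown k_odd ->].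
  by rewrite sin_mulpi_half // k_odd odd_top; case: (s).
Unshelve. all: by end_near.
Qed.

End LevelCrossings.

End Crossings.

Section Complexify.
Variable R : realType.
Local Open Scope complex_scope.
Implicit Types (p q : {poly R}) (g : {poly R[i]}).

Lemma real_complexDiM (a b : R) : a%:C + iC R * b%:C = a +i* b.
Proof. by apply/eqP; rewrite eq_complex /=; apply/andP; split; apply/eqP; ring. Qed.

Lemma coef_polyC_of p k : (polyC_of p)`_k = (p`_k)%:C.
Proof. exact: coef_map. Qed.

Lemma coef_polyC_ofDiM p q k :
  (polyC_of p + (iC R)%:P * polyC_of q)`_k = p`_k +i* q`_k.
Proof. by rewrite coefD coefCM !coef_polyC_of real_complexDiM. Qed.

Lemma polyC_ofDiM_inj p q p' q' :
  polyC_of p + (iC R)%:P * polyC_of q = polyC_of p' + (iC R)%:P * polyC_of q' ->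
  p = p' /\ q = q'.
Proof.
move=> eq_pq; have coef_eq k := congr1 (fun r : {poly R[i]} => r`_k) eq_pq.
by split; apply/polyP => k; move: (coef_eq k); rewrite /= !coef_polyC_ofDiM => -[].
Qed.

Lemma polyC_of_ReIm g :
  g = polyC_of (map_poly (@complex.Re R) g) + (iC R)%:P * polyC_of (map_poly (@complex.Im R) g).
Proof.
by apply/polyP => k; rewrite coef_polyC_ofDiM !coef_map_id0 //; case: (g`_k).
Qed.

Lemma polyC_of_prod_XsubC (rs : seq R) :
  polyC_of (\prod_(r <- rs) ('X - r%:P)) = \prod_(r <- rs) ('X - r%:C%:P).
Proof. by rewrite /polyC_of rmorph_prod; apply: eq_bigr => r _; exact: map_polyXsubC. Qed.

Lemma hornerDiM p q (x : R) :
  (polyC_of p + (iC R)%:P * polyC_of q).[x%:C] = p.[x] +i* q.[x].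
Proof. by rewrite hornerD hornerM hornerC !horner_map real_complexDiM. Qed.

End Complexify.

Section NonrealRoots.
Variables (R : realType) (zs : seq R[i]) (P1 Q1 : {poly R}).
Hypothesis zs_nonreal : all (fun z => complex.Im z != 0) zs.
Hypothesis P1Q1_zs :
  polyC_of P1 + (iC R)%:P * polyC_of Q1 = \prod_(z <- zs) ('X - z%:P).

Let np := count (fun z => 0 < complex.Im z) zs.
Let nm := count (fun z => complex.Im z < 0) zs.
(* Orients the phase so that [sg * total_phase zs] goes from [K pi] to [0]. *)
Let sg : R := if (np < nm)%N then 1 else -1.

Lemma P1Q1_polar x : exists2 rho : R, 0 < rho &
  P1.[x] = rho * cos (total_phase zs x) /\ Q1.[x] = rho * sin (total_phase zs x).
Proof.
have [rho rho_gt0 polar] := total_phase_polar x zs_nonreal; exists rho => //.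
have := hornerDiM P1 Q1 x; rewrite P1Q1_zs horner_prod.
by under eq_bigr do rewrite hornerXsubC; rewrite polar => -[<- <-].
Qed.

Lemma sg_total_phase_cvgNy :
  sg * total_phase zs x @[x --> -oo] --> (maxn np nm - minn np nm)%N%:R * pi.
Proof.
have -> : (maxn np nm - minn np nm)%N%:R * pi = sg * ((nm%:R - np%:R) * pi).
  rewrite /sg; case: ltnP => [lt_np_nm | le_nm_np].
    by rewrite mul1r natrB // ltnW.
  by rewrite natrB // mulN1r -mulNr opprB.
exact: cvgM (cvg_cst _) (total_phase_cvgNy zs_nonreal).
Qed.

Lemma nonreal_roots_chain (s e : bool) :
  (s -> \forall x \near -oo, 0 < sg * (P1.[x] * Q1.[x])) ->
  (e -> \forall x \near +oo, sg * (P1.[x] * Q1.[x]) < 0) ->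
  exists c : seq R, [/\ sorted <%R c,
    ((maxn np nm - minn np nm).*2 + s + e <= (size c).+1)%N,
    \prod_(x <- every_other (~~ s) c) ('X - x%:P) %| P1 &
    \prod_(x <- every_other s c) ('X - x%:P) %| Q1].
Proof.
move=> sign_s sign_e; pose psi x := sg * total_phase zs x.
have sg_cos t : cos (sg * t) = cos t.
  by rewrite /sg; case: ifP; rewrite ?mul1r ?mulN1r ?cosN.
have sg_sin t : sin (sg * t) = sg * sin t.
  by rewrite /sg; case: ifP; rewrite ?mul1r ?mulN1r ?sinN.
have sg_neq0 : sg != 0 by rewrite /sg; case: ifP; rewrite ?oppr_eq0 oner_eq0.
have sign x : exists2 r : R, 0 < r &
    sg * (P1.[x] * Q1.[x]) = r * (cos (psi x) * sin (psi x)).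
  have [rho rho_gt0 [-> ->]] := P1Q1_polar x.
  by exists (rho * rho); [exact: mulr_gt0 | rewrite /psi sg_cos sg_sin; ring].
have [||||c [sorted_c size_c cos_c sin_c]] :=
  crossing_chain (psi := psi) (s := s) (e := e) _ sg_total_phase_cvgNy.
- move=> x; apply: continuousM; first exact: cst_continuous.
  exact: continuous_total_phase.
- by rewrite -(mulr0 sg); exact: cvgM (cvg_cst _) (total_phase_cvgy zs_nonreal).
- move=> /sign_s; apply: filterS => x; have [r r_gt0 ->] := sign x.
  by rewrite pmulr_rgt0.
- move=> /sign_e; apply: filterS => x; have [r r_gt0 ->] := sign x.
  by rewrite pmulr_rlt0.
have uniq_c t : uniq_roots (every_other t c).
  rewrite uniq_rootsE (subseq_uniq (every_other_subseq _ _)) //.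
  exact: sorted_uniq lt_trans ltxx _ sorted_c.
exists c; split => //; apply: uniq_roots_dvdp (uniq_c _); apply/allP => x x_in;
  have [rho _ [P1x Q1x]] := P1Q1_polar x; rewrite /root.
- by rewrite P1x -sg_cos (eqP (allP cos_c x x_in)) mulr0.
- have := allP sin_c x x_in; rewrite /= sg_sin mulf_eq0 (negPf sg_neq0) Q1x.
  by move=> /eqP ->; rewrite mulr0.
Qed.

End NonrealRoots.

Section Signs.
Variable R : realFieldType.

Lemma gt0_divr_mulr (x y : R) : (0 < x / y) = (0 < x * y).
Proof.
have [->|y_neq0] := eqVneq y 0; first by rewrite invr0 !mulr0.
have y2_gt0 : 0 < y ^+ 2 by rewrite lt_def sqrf_eq0 y_neq0 sqr_ge0.
by rewrite -(pmulr_lgt0 _ y2_gt0) -mulrA expr2 mulKf.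
Qed.

Lemma gt0_mulr_cancel_common (a h p q : R) :
  0 < a * (h * p / (h * q)) -> 0 < a * (p * q).
Proof.
rewrite mulrA gt0_divr_mulr (_ : _ * _ = h ^+ 2 * (a * (p * q))); last by ring.
have [->|h_neq0] := eqVneq h 0; first by rewrite expr0n mul0r ltxx.
by rewrite pmulr_rgt0 // lt_def sqrf_eq0 h_neq0 sqr_ge0.
Qed.

Lemma lt0_mulr_cancel_common (a h p q : R) :
  a * (h * p / (h * q)) < 0 -> a * (p * q) < 0.
Proof. by rewrite -oppr_gt0 -mulNr => /gt0_mulr_cancel_common; rewrite mulNr oppr_gt0. Qed.

End Signs.

Section Conditions.
Variables (R : realType) (np nm : nat) (P Q : {poly R}).
Let sg : R := if (np < nm)%N then 1 else -1.

Lemma cond_left_near : cond_left np nm P Q ->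
  \forall x \near -oo, 0 < sg * (P.[x] / Q.[x]).
Proof.
rewrite /sg; case=> [[-> PQ_cvg] | [lt_nm_np PQ_cvg]].
  by apply: filterS (cvgry_gt PQ_cvg 0) => x; rewrite mul1r.
rewrite ltnNge ltnW //=; apply: filterS (cvgrNy_lt PQ_cvg 0) => x.
by rewrite mulN1r oppr_gt0.
Qed.

Lemma cond_right_near : cond_right np nm P Q ->
  \forall x \near +oo, sg * (P.[x] / Q.[x]) < 0.
Proof.
rewrite /sg; case=> [[-> PQ_cvg] | [lt_nm_np PQ_cvg]].
  by apply: filterS (cvgrNy_lt PQ_cvg 0) => x; rewrite mul1r.
rewrite ltnNge ltnW //=; apply: filterS (cvgry_gt PQ_cvg 0) => x.
by rewrite mulN1r oppr_lt0.
Qed.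

Lemma cond_left_neq : cond_left np nm P Q -> np != nm.
Proof. by case=> -[lt_np_nm _]; rewrite neq_ltn lt_np_nm ?orbT. Qed.

Lemma cond_right_neq : cond_right np nm P Q -> np != nm.
Proof. by case=> -[lt_np_nm _]; rewrite neq_ltn lt_np_nm ?orbT. Qed.

End Conditions.

Section PiQ.
Variable R : realType.

Lemma size_polyC_ofDiM (n : nat) (P Q : {poly R}) : size P = n.+1 -> (size Q <= n)%N ->
  size (polyC_of P + (iC R)%:P * polyC_of Q) = n.+1.
Proof.
move=> size_P size_Q; have size_polyC_of (p : {poly R}) : size (polyC_of p) = size p.
  exact: size_map_poly.
rewrite size_addl size_polyC_of // size_Cmul ?size_polyC_of ?size_P //.
by rewrite eq_complex /= oner_eq0 andbF.
Qed.

Lemma PiQ_split_real_roots (P Q : {poly R}) (rs : seq R[i]) :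
  polyC_of P + (iC R)%:P * polyC_of Q = \prod_(z <- rs) ('X - z%:P) ->
  let h := \prod_(r <- [seq complex.Re z | z <- rs & complex.Im z == 0]) ('X - r%:P) in
  let g := \prod_(z <- [seq z <- rs | complex.Im z != 0]) ('X - z%:P) in
  P = h * map_poly (@complex.Re R) g /\ Q = h * map_poly (@complex.Im R) g.
Proof.
move=> PiQ_rs h g; apply: polyC_ofDiM_inj.
have -> : polyC_of (h * map_poly (@complex.Re R) g) +
    (iC R)%:P * polyC_of (h * map_poly (@complex.Im R) g) = polyC_of h * g.
  by rewrite [g in RHS]polyC_of_ReIm /polyC_of !rmorphM mulrDr mulrCA.
rewrite PiQ_rs (bigID (fun z => complex.Im z == 0)) /= /h /g big_filter.
rewrite polyC_of_prod_XsubC big_map big_filter; congr (_ * _).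
by apply: eq_bigr => -[a b] /= /eqP ->.
Qed.

End PiQ.

Lemma interlacing_PiQ (R : realType) (n : nat) (P Q : {poly R}) (rs : seq R[i]) :
  size P = n.+1 -> (size Q <= n)%N ->
  polyC_of P + (iC R)%:P * polyC_of Q = \prod_(z <- rs) ('X - z%:P) ->
  interlacing_conclusion n (count (fun z => 0 < complex.Im z) rs)
    (count (fun z => complex.Im z < 0) rs) (count (fun z => complex.Im z == 0) rs) P Q.
Proof.
move=> size_P size_Q PiQ_rs.
set np := count _ rs; set nm := count _ rs; set n0 := count _ rs.
have [P_eq Q_eq] := PiQ_split_real_roots PiQ_rs.
set rr := [seq complex.Re z | z <- rs & _] in P_eq Q_eq.
set zs := [seq z <- rs | _] in P_eq Q_eq.
have zs_nonreal : all (fun z => complex.Im z != 0) zs.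
  by apply/allP => z; rewrite mem_filter => /andP[].
have np_zs : np = count (fun z => 0 < complex.Im z) zs.
  by rewrite count_filter; apply: eq_count => z /=; case: ltgtP.
have nm_zs : nm = count (fun z => complex.Im z < 0) zs.
  by rewrite count_filter; apply: eq_count => z /=; case: ltgtP.
have n0_rr : n0 = size rr by rewrite size_map size_filter.
have n_eq : n = (np + nm + n0)%N.
  have := congr1 (fun p : {poly R[i]} => size p) PiQ_rs.
  rewrite /= (size_polyC_ofDiM size_P size_Q) size_prod_XsubC => -[->].
  by rewrite /np /nm /n0; elim: (rs) => //= z rs' ->; case: ltgtP; lia.
set s := `[< cond_left np nm P Q >]; set e := `[< cond_right np nm P Q >].
have [||c0 [sorted_c0 size_c0 dvd_P1 dvd_Q1]] :=
  nonreal_roots_chain zs_nonreal (esym (polyC_of_ReIm _)) (s := s) (e := e).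
- move=> /asboolP/cond_left_near; rewrite np_zs nm_zs; apply: filterS => x.
  by rewrite P_eq Q_eq !hornerM; exact: gt0_mulr_cancel_common.
- move=> /asboolP/cond_right_near; rewrite np_zs nm_zs; apply: filterS => x.
  by rewrite P_eq Q_eq !hornerM; exact: lt0_mulr_cancel_common.
rewrite -np_zs -nm_zs in size_c0.
have [c [sorted_c size_c perm_c]] := sorted_lteif_insert_pairs rr sorted_c0.
apply: (@interlacing_conclusion_of_chain _ _ _ _ _ _ _ s e c).
- by move: size_c0; rewrite size_c -n0_rr -mul2n n_eq; case: (s) (e) => [] [] /=; lia.
- by rewrite n0_rr size_eq0.
- by rewrite (perm_big _ (perm_c _)) big_cat P_eq dvdp_mul.
- by rewrite (perm_big _ (perm_c _)) big_cat Q_eq dvdp_mul.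
- by move=> cl; split; [exact/asboolP | have := cond_left_neq cl; lia].
- by move=> cr; split; [exact/asboolP | have := cond_right_neq cr; lia].
Qed.

Lemma coef_prod_XsubC_scale (F : comNzRingType) (c : F) (rs : seq F) k :
  (\prod_(z <- rs) ('X - (c * z)%:P))`_k =
  c ^+ (size rs - k) * (\prod_(z <- rs) ('X - z%:P))`_k.
Proof.
elim: rs k => [|z rs IHrs] k; first by rewrite !big_nil sub0n expr0 mul1r.
rewrite !big_cons !mulrBl !coefB !coefXM !coefCM !IHrs /=.
have := size_prod_XsubC rs id; move: (\prod_(z <- rs) _) => p size_p.
case: k => [|k] /=; first by rewrite !subn0 exprS; ring.
rewrite subSS; have [lt_k | le_k] := ltnP k (size rs).
  by rewrite (_ : size rs - k = (size rs - k.+1).+1)%N ?exprS; [ring | lia].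
have /leq_sizeP p_k1 : (size p <= k.+1)%N by rewrite size_p.
by rewrite (p_k1 k.+1) // (_ : size rs - k = 0)%N ?mulr0 ?subr0 //; lia.
Qed.

Section Rotation.
Variable R : realType.

Lemma iC_sqr : iC R ^+ 2 = -1.
Proof. by apply/eqP; rewrite expr2 eq_complex /=; apply/andP; split; apply/eqP; ring. Qed.

Lemma expr_NiC (m : nat) : (- iC R) ^+ m =
  (-1) ^+ m./2 * (if odd m then - iC R else 1).
Proof.
rewrite -{1}(odd_double_half m) exprD -mul2n exprM sqrrN iC_sqr mulrC.
by case: (odd m); rewrite ?expr1 ?expr0.
Qed.

Lemma Im_NiCM (z : R[i]) : complex.Im (- iC R * z) = - complex.Re z.
Proof. by case: z => a b /=; ring. Qed.

Lemma even_odd_partE (n : nat) (f : {poly R}) (rs : seq R[i]) :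
  size f = n.+1 -> polyC_of f = \prod_(z <- rs) ('X - z%:P) ->
  polyC_of (even_part n f) + (iC R)%:P * polyC_of (- odd_part n f) =
  \prod_(w <- [seq - iC R * z | z <- rs]) ('X - w%:P).
Proof.
move=> size_f f_rs; have size_rs : size rs = n.
  have := congr1 (fun p : {poly R[i]} => size p) f_rs.
  by rewrite /= size_map_poly size_f size_prod_XsubC => -[].
apply/polyP => k; rewrite big_map coef_prod_XsubC_scale -f_rs coef_polyC_of size_rs.
rewrite coefD coefCM !coef_polyC_of coefN !coef_poly.
case: ltnP => [lt_k | le_k].
  by rewrite expr_NiC; case: ifP => _; rewrite !rmorphN !rmorphM !rmorphXn !rmorphN1 ?rmorph0; ring.
have /leq_sizeP -> // : (size f <= k)%N by rewrite size_f.
by rewrite !rmorphN !rmorph0; ring.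
Qed.

End Rotation.

Section Swap.
Variables (R : realType) (np nm : nat) (P Q : {poly R}).

Let divrN_fun : (fun x => P.[x] / (- Q).[x]) = - (fun x => P.[x] / Q.[x]).
Proof. by apply: funext => x /=; rewrite hornerN invrN mulrN. Qed.

Lemma cond_left_oppr : cond_left np nm P Q -> cond_left nm np P (- Q).
Proof.
case=> -[lt PQ_cvg]; [right | left]; split; rewrite // divrN_fun.
  by apply/cvgNrNy.
by apply/cvgNry.
Qed.

Lemma cond_right_oppr : cond_right np nm P Q -> cond_right nm np P (- Q).
Proof.
case=> -[lt PQ_cvg]; [right | left]; split; rewrite // divrN_fun.
  by apply/cvgNry.
by apply/cvgNrNy.
Qed.

Lemma interlacing_conclusion_oppr (n n0 : nat) :
  interlacing_conclusion n nm np n0 P (- Q) -> interlacing_conclusion n np nm n0 P Q.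
Proof.
rewrite /interlacing_conclusion [minn nm np]minnC.
move=> [mu [nu [nu0 [nud [size_mu size_nu dvd_P dvd_Q [lace left right]]]]]].
exists mu, nu, nu0, nud; split; [exact: size_mu | exact: size_nu | exact: dvd_P | |].
  by rewrite -dvdpNr.
split; [exact: lace | move=> /cond_left_oppr; exact: left | move=> /cond_right_oppr; exact: right].
Qed.

End Swap.

Section EvenOdd.
Variables (R : realType) (n : nat) (f : {poly R}).

Lemma size_even_part : f \is monic -> size f = n.+1 -> size (even_part n f) = n.+1.
Proof.
move=> /monicP f_monic size_f; apply/anti_leq; rewrite size_poly /=.
rewrite ltnNge; apply/negP => /leq_sizeP /(_ n (leqnn n)).
rewrite coef_poly ltnSn subnn /= mul1r -[n]/(n.+1.-1) -size_f -lead_coefE f_monic.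
exact/eqP/oner_neq0.
Qed.

Lemma size_odd_part : (size (odd_part n f) <= n)%N.
Proof.
apply/leq_sizeP => j le_nj; rewrite coef_poly.
by case: ltnP => // lt_jn; rewrite (_ : j = n) ?subnn //; lia.
Qed.

End EvenOdd.

Lemma interlacing_even_odd (R : realType) (n : nat) (f : {poly R}) (rs : seq R[i]) :
  f \is monic -> size f = n.+1 -> polyC_of f = \prod_(z <- rs) ('X - z%:P) ->
  interlacing_conclusion n (count (fun z => 0 < complex.Re z) rs)
    (count (fun z => complex.Re z < 0) rs) (count (fun z => complex.Re z == 0) rs)
    (even_part n f) (odd_part n f).
Proof.
move=> f_monic size_f f_rs; apply: interlacing_conclusion_oppr.
have size_odd : (size (- odd_part n f) <= n)%N by rewrite size_polyN size_odd_part.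
have := interlacing_PiQ (size_even_part f_monic size_f) size_odd (even_odd_partE size_f f_rs).
rewrite !count_map; congr interlacing_conclusion; apply: eq_count => z /=;
  by rewrite Im_NiCM ?oppr_gt0 ?oppr_lt0 ?oppr_eq0.
Qed.

Theorem mainTheorem3 (R : realType) :
  (* Part 1: f = P + i Q *)
  (forall (n : nat) (P Q : {poly R}) (rs : seq R[i]) (np nm n0 : nat),
     (1 <= n)%N ->
     P \is monic -> size P = n.+1 -> (size Q <= n)%N ->
     polyC_of P + (iC R)%:P * polyC_of Q = \prod_(z <- rs) ('X - z%:P) ->
     np = count (fun z => 0 < complex.Im z) rs ->
     nm = count (fun z => complex.Im z < 0) rs ->
     n0 = count (fun z => complex.Im z == 0) rs ->
     (n0 < n)%N ->
     interlacing_conclusion n np nm n0 P Q) /\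
  (* Part 2: f real, roots split by the sign of the real part *)
  (forall (n : nat) (f : {poly R}) (rs : seq R[i]) (np nm n0 : nat),
     (1 <= n)%N ->
     f \is monic -> size f = n.+1 ->
     polyC_of f = \prod_(z <- rs) ('X - z%:P) ->
     np = count (fun z => 0 < complex.Re z) rs ->
     nm = count (fun z => complex.Re z < 0) rs ->
     n0 = count (fun z => complex.Re z == 0) rs ->
     (n0 < n)%N ->
     interlacing_conclusion n np nm n0 (even_part n f) (odd_part n f)).
Proof.
split.
  move=> n P Q rs np nm n0 _ _ size_P size_Q PiQ_rs -> -> -> _.
  exact: interlacing_PiQ.
move=> n f rs np nm n0 _ f_monic size_f f_rs -> -> -> _.
exact: interlacing_even_odd.
Qed.
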